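(* Let $n\ge0$ and $r\ge0$ be integers, $x=(x_1,\dots,x_n)$ and $x_0=0$. Then $$\sum_{\substack{\lambda:\ l(\lambda)=r\\ \lambda_1\le n}}\ \prod_{j=1}^n\frac{1}{m_j!}\prod_{i=1}^r(n-\lambda_i-i+2)(x_{\lambda_i}-x_{\lambda_i-1})=e_r(x),$$ where the sum is over partitions $\lambda$ with exactly $r$ nonzero parts, all at most $n$, and $m_j$ is the multiplicity of the part $j$ in $\lambda$.
   Context: $e_r(x)=\sum_{1\le i_1<\cdots<i_r\le n}x_{i_1}\cdots x_{i_r}$ is the $r$th elementary symmetric polynomial ($e_0=1$, $e_r=0$ for $r>n$). $l(\lambda)$ is the number of nonzero parts of $\lambda$. *)

From HB Require Import structures.
From mathcomp Require Import all_boot all_order all_algebra.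
Set Implicit Arguments. Unset Strict Implicit. Unset Printing Implicit Defensive.
Import Order.TTheory GRing.Theory Num.Theory.
Local Open Scope ring_scope.

(* Elementary symmetric polynomial e_r evaluated at (x 1, ..., x n):
   sum over r-element subsets S of {1..n} (encoded as subsets of 'I_n,
   index i standing for i+1) of prod_{i in S} x_(i+1). *)
Definition elem_sym (R : comNzRingType) (n r : nat) (x : nat -> R) : R :=
  \sum_(S : {set 'I_n} | #|S| == r) \prod_(i in S) x i.+1.

(* A partition with exactly r nonzero parts, all at most n, encoded as
   lam : 'I_r -> 'I_n.+1 with lam i = lambda_(i+1): all parts nonzero and
   weakly decreasing. *)
Definition is_part_rn (n r : nat) (lam : {ffun 'I_r -> 'I_n.+1}) : bool :=
  [forall i, (0 < val (lam i))%N] &&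
  [forall i, forall j, (val i <= val j)%N ==> (val (lam j) <= val (lam i))%N].

Definition mult_part (n r : nat) (lam : {ffun 'I_r -> 'I_n.+1}) (j : nat) : nat :=
  #|[set i | val (lam i) == j]|.

(* For a parameter a, the part bound k and the length r, consider the
   deformed sum
     G(a, k, r) = sum over partitions lam with r parts, all at most k, of
                  prod_j 1/m_j! * prod_i (a - lam_i - i + 2)(x_lam_i - x_(lam_i - 1)),
   so that the left-hand side of the theorem is G(n, n, r).  Splitting off the
   m parts equal to k+1 (which occupy the first m slots) gives the recurrence
     G(a, k+1, r) = sum_m C(a-k, m) (x_(k+1) - x_k)^m G(a-m, k, r-m):
   these slots contribute the falling factorial (a-k)(a-k-1)...(a-k-m+1),
   which the factor 1/m! turns into a binomial coefficient.  The elementary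
   symmetric function e_r(x_1, ..., x_k, x_k, ..., x_k) with a-k trailing
   copies of x_k satisfies the same recurrence, by expanding each copy of
   x_(k+1) = x_k + (x_(k+1) - x_k) binomially; for k = 0 both sides are
   [r == 0] since x_0 = 0.  Induction on k thus identifies the two, and
   a = k = n is the theorem. *)

From HB Require Import structures.
From mathcomp Require Import all_boot all_order all_algebra.
From mathcomp Require Import ring.
Set Implicit Arguments. Unset Strict Implicit. Unset Printing Implicit Defensive.
Import Order.TTheory GRing.Theory Num.Theory.

Section PartitionSequences.
Local Open Scope nat_scope.

Definition is_partseq (k r : nat) (s : seq nat) : bool :=
  [&& size s == r, sorted geq s & all (fun v => 0 < v <= k) s].

Fixpoint partseqs (k r : nat) : seq (seq nat) :=
  if k is k'.+1 then
    [seq nseq m k ++ s | m <- iota 0 r.+1, s <- partseqs k' (r - m)]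
  else if r == 0 then [:: [::]] else [::].

Lemma partseqsS k r :
  partseqs k.+1 r =
    [seq nseq m k.+1 ++ s | m <- iota 0 r.+1, s <- partseqs k (r - m)].
Proof. by []. Qed.

Lemma geq_trans : transitive geq.
Proof. by move=> a b c ba cb; apply: leq_trans cb ba. Qed.

Lemma sorted_nseq_cat m c s :
  sorted geq s -> all (fun v => v <= c) s -> sorted geq (nseq m c ++ s).
Proof.
move=> srt_s le_s; elim: m => [//|m IHm] /=.
by rewrite (path_sortedE geq_trans) IHm all_cat all_nseq le_s /= leqnn orbT.
Qed.

Lemma split_largest_parts k s :
  sorted geq s -> all (fun v => 0 < v <= k.+1) s ->
  exists m s', [/\ s = nseq m k.+1 ++ s', sorted geq s' &
                   all (fun v => 0 < v <= k) s'].
Proof.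
elim: s => [|h t IHt] /=; first by exists 0, [::].
move=> srt /andP[/andP[h_gt0 h_le] t_ok]; have srt_t := path_sorted srt.
have [->|h_neq] := eqVneq h k.+1.
  by have [m [s' [-> ? ?]]] := IHt srt_t t_ok; exists m.+1, s'.
have h_lek : h <= k by rewrite -ltnS ltn_neqAle h_neq h_le.
exists 0, (h :: t); split => //=; rewrite h_gt0 h_lek /=.
move: srt; rewrite (path_sortedE geq_trans) => /andP[/allP t_le _].
apply/allP => v vt; have /andP[-> _] := allP t_ok v vt.
exact: leq_trans (t_le v vt) h_lek.
Qed.

Lemma mem_partseqs k r s : (s \in partseqs k r) = is_partseq k r s.
Proof.
elim: k r s => [|k IHk] r s.
  by case: r => [|r]; case: s => [|[|h] t]; rewrite /is_partseq //= ?inE ?andbF.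
rewrite partseqsS; apply/allpairsPdep/idP => [[m [s' [m_le s'_in ->]]] | ].
  move: m_le s'_in; rewrite mem_iota ltnS IHk => m_le /and3P[/eqP sz srt ok].
  apply/and3P; split.
  - by rewrite size_cat size_nseq sz subnKC.
  - apply: sorted_nseq_cat srt _; apply/allP => v /(allP ok) /andP[_].
    by move/leq_trans; apply.
  - rewrite all_cat all_nseq leqnn orbT /=; apply/allP => v /(allP ok).
    by case/andP=> -> /leq_trans ->.
case/and3P=> /eqP sz srt ok.
have [m [s' [def_s srt' ok']]] := split_largest_parts srt ok.
have size_s : size s = m + size s' by rewrite def_s size_cat size_nseq.
exists m, s'; split => //; first by rewrite mem_iota ltnS -sz size_s leq_addr.
by rewrite IHk /is_partseq srt' ok' -sz size_s addKn eqxx.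
Qed.

Lemma partseqs_uniq k r : uniq (partseqs k r).
Proof.
elim: k r => [|k IHk] r; first by case: r.
rewrite partseqsS.
have no_top m s' : s' \in partseqs k (r - m) -> count_mem k.+1 s' = 0.
  rewrite mem_partseqs => /and3P[_ _ ok]; apply/count_memPn/negP => /(allP ok).
  by rewrite ltnn andbF.
apply: allpairs_uniq_dep => [|m _|]; rewrite ?iota_uniq ?IHk //.
move=> [m1' s1'] [m2' s2'] /allpairsPdep[m1 [s1 [_ s1_in [e_m1 e_s1]]]].
move=> /allpairsPdep[m2 [s2 [_ s2_in [e_m2 e_s2]]]] /= eq_cat.
subst m1' s1' m2' s2'.
have eq_m : m1 = m2.
  have := congr1 (count_mem k.+1) eq_cat.
  rewrite !count_cat !count_nseq (no_top _ _ s1_in) (no_top _ _ s2_in).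
  by rewrite /= eqxx !mul1n !addn0.
move: s1_in eq_cat; rewrite eq_m => s1_in /eqP.
by rewrite eqseq_cat ?size_nseq // => /andP[_ /eqP ->].
Qed.

End PartitionSequences.

Local Open Scope ring_scope.

Section ElementarySymmetric.
Variable R : comNzRingType.

Definition esym_seq (l : seq R) (r : nat) : R :=
  (\prod_(c <- l) (c *: 'X + 1))`_r.

Lemma elem_symE (n r : nat) (x : nat -> R) :
  elem_sym n r x = esym_seq [seq x i | i <- iota 1 n] r.
Proof.
rewrite /esym_seq -[1%N]/(1 + 0)%N iotaDl -map_comp big_map -val_enum_ord.
rewrite big_map big_enum /= bigA_distr coef_sum /elem_sym big_mkcond.
apply: eq_bigr => S _.
rewrite -big_mkcond scaler_prodr coefZ coefXn eq_sym.
by case: ifP => _; rewrite ?mulr1 ?mulr0.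
Qed.

Lemma big_ord_pad (V : nmodType) (m N : nat) (F : nat -> V) : (m <= N)%N ->
  (forall i, (m <= i < N)%N -> F i = 0) ->
  \sum_(i < m) F i = \sum_(i < N) F i.
Proof.
move=> le_mN F0; rewrite (big_ord_widen N F le_mN) big_mkcond.
apply: eq_bigr => i _; case: ltnP => // ge_m.
by rewrite F0 // ge_m ltn_ord.
Qed.

(* Binomial expansion of e_r when c entries u + v are split into u and v:
   coefficient extraction in prod (1 + aX) * ((1 + uX) + vX)^c. *)
Lemma esym_seq_binomial (L : seq R) (c r : nat) (u v : R) :
  esym_seq (L ++ nseq c (u + v)) r =
  \sum_(m < r.+1) 'C(c, m)%:R * v ^+ m * esym_seq (L ++ nseq (c - m) u) (r - m).
Proof.
pose P := \prod_(a <- L) (a *: 'X + 1).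
have prod_cat d w : \prod_(a <- L ++ nseq d w) (a *: 'X + 1) = P * (w *: 'X + 1) ^+ d.
  by rewrite big_cat big_nseq iter_mulr_1.
pose F m := 'C(c, m)%:R * v ^+ m *
  (if (r < m)%N then 0 else (P * (u *: 'X + 1) ^+ (c - m))`_(r - m)).
have -> : esym_seq (L ++ nseq c (u + v)) r = \sum_(m < c.+1) F m.
  rewrite /esym_seq prod_cat scalerDl addrAC exprDn mulr_sumr coef_sum.
  apply: eq_bigr => m _; rewrite exprZn mulrnAr coefMn -!scalerAr mulrA.
  by rewrite coefZ coefMXn /F -mulrA mulr_natl.
rewrite (@big_ord_pad _ _ (c + r).+1) ?ltnS ?leq_addr //; last first.
  by move=> m /andP[lt_cm _]; rewrite /F bin_small // !mul0r.
rewrite -(@big_ord_pad _ r.+1 (c + r).+1 F) ?ltnS ?leq_addl //; last first.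
  by move=> m /andP[lt_rm _]; rewrite /F lt_rm mulr0.
apply: eq_bigr => m _.
by rewrite /F ltnNge -ltnS ltn_ord /esym_seq prod_cat.
Qed.
End ElementarySymmetric.

Lemma natr_prod_sub (R : comNzRingType) (c m : nat) :
  \prod_(i < m) (c%:R - i%:R : R) = (c ^_ m)%:R.
Proof.
have [le_mc | lt_cm] := leqP m c.
  rewrite ffact_prod natr_prod; apply: eq_bigr => i _.
  by rewrite natrB // ltnW // (leq_trans (ltn_ord i) le_mc).
by rewrite ffact_small // (bigD1 (Ordinal lt_cm)) //= subrr mul0r.
Qed.

Lemma binomial_falling (R : numFieldType) (c m : nat) :
  (m`!%:R)^-1 * (c ^_ m)%:R = 'C(c, m)%:R :> R.
Proof.
by rewrite -bin_ffact natrM mulrC mulfK // pnatr_eq0 -lt0n fact_gt0.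
Qed.

Section PartitionSum.
Variables (R : numFieldType) (n : nat) (x : nat -> R).

Definition incr (j : nat) : R := x j - x j.-1.

Fixpoint shift_prod (al : R) (s : seq nat) : R :=
  if s is h :: t then (al - h%:R + 1) * incr h * shift_prod (al - 1) t else 1.

Lemma shift_prodE al s r : size s = r -> shift_prod al s =
  \prod_(i < r) ((al - (nth 0 s i)%:R - i.+1%:R + 2%:R) * incr (nth 0 s i)).
Proof.
move=> <-; elim: s al => [|h t IHt] al /=; first by rewrite big_ord0.
rewrite big_ord_recl IHt /=; congr (_ * _ * _); first by ring.
by apply: eq_bigr => i _; rewrite /= /bump /=; congr (_ * _); ring.
Qed.

Lemma shift_prod_nseq al m c s : shift_prod al (nseq m c.+1 ++ s) =
  (\prod_(i < m) (al - c%:R - i%:R)) * incr c.+1 ^+ m * shift_prod (al - m%:R) s.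
Proof.
elim: m al => [|m IHm] al /=; first by rewrite big_ord0 subr0 !mul1r.
rewrite IHm big_ord_recl exprS /=.
have -> : \prod_(i < m) (al - 1 - c%:R - i%:R) =
          \prod_(i < m) (al - c%:R - (bump 0 i)%:R).
  by apply: eq_bigr => i _; rewrite /bump /=; ring.
have -> : al - 1 - m%:R = al - m.+1%:R by ring.
ring.
Qed.

Definition mult_weight (s : seq nat) : R :=
  \prod_(1 <= j < n.+1) ((count_mem j s)`!%:R)^-1.

Lemma mult_weight_nseq m k s : (k < n)%N -> k.+1 \notin s ->
  mult_weight (nseq m k.+1 ++ s) = (m`!%:R)^-1 * mult_weight s.
Proof.
move=> lt_kn ks; rewrite /mult_weight.
have k_in : k.+1 \in index_iota 1 n.+1 by rewrite mem_index_iota ltnS.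
rewrite !(bigD1_seq _ k_in) ?iota_uniq // count_cat count_nseq /= eqxx mul1n.
rewrite (count_memPn ks) addn0 fact0 invr1 mul1r; congr (_ * _).
by apply: eq_bigr => j /negbTE nj; rewrite count_cat count_nseq /= eq_sym nj mul0n.
Qed.

Definition part_sum (al : R) (k r : nat) : R :=
  \sum_(s <- partseqs k r) mult_weight s * shift_prod al s.

Lemma part_sum_rec al k r : (k < n)%N ->
  part_sum al k.+1 r = \sum_(m < r.+1) (m`!%:R)^-1 *
    (\prod_(i < m) (al - k%:R - i%:R)) * incr k.+1 ^+ m * part_sum (al - m%:R) k (r - m).
Proof.
move=> lt_kn; rewrite /part_sum partseqsS big_allpairs_dep.
rewrite -[iota 0 r.+1]/(index_iota 0 r.+1) big_mkord.
apply: eq_bigr => m _; rewrite mulr_sumr big_seq [RHS]big_seq.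
apply: eq_bigr => s; rewrite mem_partseqs => /and3P[_ _ ok].
have ks : k.+1 \notin s by apply/negP => /(allP ok); rewrite ltnn andbF.
rewrite mult_weight_nseq // shift_prod_nseq; ring.
Qed.

Lemma part_sum_binomial (a k r : nat) : (k < n)%N -> (k <= a)%N ->
  part_sum a%:R k.+1 r = \sum_(m < r.+1)
    'C(a - k, m)%:R * incr k.+1 ^+ m * part_sum (a%:R - m%:R) k (r - m).
Proof.
move=> lt_kn le_ka; rewrite part_sum_rec //; apply: eq_bigr => m _.
have -> : \prod_(i < m) (a%:R - k%:R - i%:R) = \prod_(i < m) ((a - k)%:R - i%:R) :> R.
  by apply: eq_bigr => i _; rewrite natrB.
by rewrite natr_prod_sub binomial_falling.
Qed.

Hypothesis x0 : x 0 = 0.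

Lemma part_sum_esym k : (k <= n)%N -> forall a r, (k <= a)%N ->
  part_sum a%:R k r = esym_seq ([seq x i | i <- iota 1 k] ++ nseq (a - k) (x k)) r.
Proof.
elim: k => [|k IHk] le_kn a r le_ka.
  rewrite /part_sum /esym_seq subn0 x0 big_nseq scale0r add0r iter_mulr_1.
  rewrite expr1n coef1; case: r => [|r]; rewrite /= ?big_nil //.
  by rewrite big_cons big_nil addr0 mulr1 /mult_weight big1 // => j _; rewrite invr1.
rewrite (part_sum_binomial _ le_kn (ltnW le_ka)).
have -> : [seq x i | i <- iota 1 k.+1] ++ nseq (a - k.+1) (x k.+1) =
          [seq x i | i <- iota 1 k] ++ nseq (a - k) (x k + incr k.+1).
  rewrite /incr succnK addrC subrK -(subnSK le_ka) -[in LHS](addn1 k) iotaD.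
  by rewrite map_cat -catA add1n addn1.
rewrite esym_seq_binomial; apply: eq_bigr => m _.
have [le_m | lt_m] := leqP m (a - k); last by rewrite bin_small // !mul0r.
have le_ma : (m <= a)%N by apply: leq_trans le_m (leq_subr _ _).
have le_k_am : (k <= a - m)%N by rewrite leq_subRL // addnC -leq_subRL // ltnW.
by rewrite -natrB // (IHk (ltnW le_kn)) // subnAC.
Qed.
End PartitionSum.

Section PartitionsAsSequences.
Variables n r : nat.
Implicit Type lam : {ffun 'I_r -> 'I_n.+1}.

Definition part_seq lam : seq nat := [seq val (lam i) | i <- enum 'I_r].

Lemma size_part_seq lam : size (part_seq lam) = r.
Proof. by rewrite size_map size_enum_ord. Qed.

Lemma nth_part_seq lam (i : 'I_r) : nth 0 (part_seq lam) i = lam i.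
Proof. by rewrite (nth_map i) ?size_enum_ord // nth_ord_enum. Qed.

Lemma count_part_seq lam j : mult_part lam j = count_mem j (part_seq lam).
Proof.
rewrite /mult_part /part_seq -sum1_count big_map big_enum_cond /=.
by rewrite sum1_card cardsE.
Qed.

Lemma part_seq_inj : injective part_seq.
Proof.
by move=> lam1 lam2 eq12; apply/ffunP => i; apply: ord_inj; rewrite -!nth_part_seq eq12.
Qed.

Lemma is_part_rnE lam : is_part_rn lam = is_partseq n r (part_seq lam).
Proof.
rewrite /is_part_rn /is_partseq size_part_seq eqxx andbC /=; congr andb.
  rewrite (sorted_pairwise geq_trans); apply/forallP/(pairwiseP 0) => [dec i j|].
    rewrite !inE size_part_seq => lt_ir lt_jr lt_ij.
    rewrite -[i]/(nat_of_ord (Ordinal lt_ir)) -[j]/(nat_of_ord (Ordinal lt_jr)).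
    have /forallP/(_ (Ordinal lt_jr))/implyP := dec (Ordinal lt_ir).
    by rewrite !nth_part_seq; apply; apply: ltnW.
  move=> dec i; apply/forallP => j; apply/implyP; rewrite leq_eqVlt.
  case/orP => [/eqP/ord_inj -> // | lt_ij].
  by rewrite -!nth_part_seq; apply: dec; rewrite // inE size_part_seq.
apply/forallP/allP => [pos _ /mapP[i _ ->] | pos i].
  by rewrite pos -ltnS ltn_ord.
by have /andP[] := pos _ (map_f (fun i => val (lam i)) (mem_enum _ i)).
Qed.

Lemma part_seq_surj s : is_partseq n r s -> exists lam, part_seq lam = s.
Proof.
case/and3P=> /eqP size_s _ /allP ok.
have le_n i : (nth 0 s i <= n)%N.
  by case: (ltnP i (size s)) => [/(mem_nth 0)/ok/andP[] | /(nth_default 0)->].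
exists [ffun i : 'I_r => inord (nth 0 s i) : 'I_n.+1]; apply: (@eq_from_nth _ 0).
  by rewrite size_part_seq.
move=> i; rewrite size_part_seq => lt_ir.
by rewrite -[i]/(nat_of_ord (Ordinal lt_ir)) nth_part_seq ffunE inordK // ltnS.
Qed.

Lemma sum_part_rn (V : nmodType) (F : seq nat -> V) :
  \sum_(lam | is_part_rn lam) F (part_seq lam) = \sum_(s <- partseqs n r) F s.
Proof.
rewrite -big_filter -(big_map part_seq xpredT F); apply: perm_big.
apply: uniq_perm; rewrite ?partseqs_uniq ?map_inj_uniq ?filter_uniq ?index_enum_uniq //.
  exact: part_seq_inj.
move=> s; rewrite mem_partseqs; apply/mapP/idP => [[lam] | ps].
  by rewrite mem_filter is_part_rnE => /andP[+ _] ->.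
have [lam def_s] := part_seq_surj ps.
by exists lam; rewrite // mem_filter mem_index_enum is_part_rnE def_s ps.
Qed.
End PartitionsAsSequences.

Theorem mainTheorem11 (R : numFieldType) (n r : nat) (x : nat -> R)
    (hx0 : x 0%N = 0) :
  \sum_(lam : {ffun 'I_r -> 'I_n.+1} | is_part_rn lam)
     ((\prod_(1 <= j < n.+1) ((mult_part lam j)`!%:R)^-1) *
      \prod_(i < r) ((n%:R - (val (lam i))%:R - (i.+1)%:R + 2%:R) *
                     (x (val (lam i)) - x (val (lam i)).-1)))
  = elem_sym n r x.
Proof.
have := part_sum_esym hx0 (leqnn n) r (leqnn n).
rewrite subnn cats0 -elem_symE => <-.
rewrite /part_sum -sum_part_rn; apply: eq_bigr => lam _.
rewrite (shift_prodE _ _ (size_part_seq lam)); congr (_ * _).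
  by apply: eq_bigr => j _; rewrite count_part_seq.
by apply: eq_bigr => i _; rewrite nth_part_seq.
Qed.
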